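(* For every alphabet $\Sigma$, every $n\ge 2$ and every $n$-gram LM $p$ over $\Sigma$, there exists a single-layer hard attention transformer LM with $n-1$ attention heads that is weakly equivalent to $p$.
   Context: Let $\Sigma$ be a finite nonempty alphabet and let $\mathrm{EOS},\mathrm{BOS}\notin\Sigma$ be distinct symbols; put $\overline\Sigma=\Sigma\cup\{\mathrm{EOS}\}$ and $\underline\Sigma=\Sigma\cup\{\mathrm{BOS}\}$. A language model (LM) over $\Sigma$ is a probability distribution $p$ on $\Sigma^*$ given autoregressively by $p(y)=p(\mathrm{EOS}\mid y)\prod_{t=1}^{|y|}p(y_t\mid y_{<t})$, where each $p(\cdot\mid y_{<t})$ is a probability distribution on $\overline\Sigma$. Two LMs $p,q$ over $\Sigma$ are weakly equivalent if $p(y)=q(y)$ for all $y\in\Sigma^*$. For $n\ge2$, an $n$-gram LM is an LM such that, after left-padding every string with $n-1$ copies of $\mathrm{BOS}$, $p(y_t\mid y_{<t})=p(y_t\mid y_{t-n+1}\cdots y_{t-1})$ depends only on the history $y_{t-n+1}\cdots y_{t-1}\in\underline\Sigma^{\,n-1}$ (the last $n-1$ symbols of the padded prefix); the distributions on $\overline\Sigma$ assigned to the histories are arbitrary (probabilities may be $0$). Transformers. A transformer of width $D$ processes a string $w=w_1\cdots w_T$ over $\underline\Sigma$ (for an LM, the prefix $y_{<t}$ left-padded with $n-1$ copies of BOS) as follows. A static encoding gives $x^0_j=r(w_j,j)\in\mathbb R^D$ for a function $r:\underline\Sigma\times\mathbb N\to\mathbb R^D$. An attention head with query, key, value, output functions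 $Q,K,V,O:\mathbb R^D\to\mathbb R^D$, scoring function $f:\mathbb R^D\times\mathbb R^D\to\mathbb R$ and normalization function $\pi$ maps $(x_1,\dots,x_T)$ to $(z_1,\dots,z_T)$ where, for each position $s$, $q_s=Q(x_s)$, $k_j=K(x_j)$, $v_j=V(x_j)$, $\sigma=\pi(f(q_s,k_1),\dots,f(q_s,k_s))$ (a probability vector), $a_s=\sum_{j=1}^s\sigma_jv_j+x_s$, $z_s=O(a_s)+a_s$. A layer with $H$ heads applies $H$ heads to the same input and maps the concatenation of the $H$ outputs at each position back to $\mathbb R^D$ with a head-combining function $\mathcal H:\mathbb R^{HD}\to\mathbb R^D$; an $L$-layer transformer composes $L$ layers after $r$. Given a final function $F:\mathbb R^D\to\mathbb R^D$ and an output matrix $E\in(\mathbb R\cup\{-\infty\})^{|\overline\Sigma|\times D}$ (with $\exp(-\infty)=0$), the transformer LM sets $p(y_t\mid y_{<t})=\mathrm{softmax}(E\,F(x^L))_{y_t}$, where $x^L$ is the last-layer representation at the last position of the padded prefix $y_{<t}$. In this definition $r,Q,K,V,O,f,\mathcal H,F$ are arbitrary functions. Hard attention means $\pi=\mathrm{hardmax}$, where $\mathrm{hardmax}(x)_d=1/m$ if $d\in\arg\max x$ with $m=|\arg\max x|$, and $0$ otherwise. Sparse attention means $\pi=\mathrm{sparsemax}$, $\mathrm{sparsemax}(x)=\arg\min_{p\in\Delta}\|p-x\|_2^2$ over the probability simplex $\Delta$. *)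

From HB Require Import structures.
From mathcomp Require Import all_boot all_order all_algebra.
From mathcomp Require Import all_classical all_reals all_analysis.

Unset Implicit Arguments.
Unset Strict Implicit.
Unset Printing Implicit Defensive.

Import Order.TTheory GRing.Theory Num.Theory.
Local Open Scope ring_scope.

Section LMDefs.
Variables (R : realType) (Sigma : finType).

(* Conventions: the alphabet Sigma is a finite type.
   overline Sigma = Sigma ∪ {EOS} is represented by [option Sigma] with None = EOS.
   underline Sigma = Sigma ∪ {BOS} is represented by [option Sigma] with None = BOS. *)

Definition is_distr (d : option Sigma -> R) : Prop :=
  (forall a, 0 <= d a) /\ \sum_(a : option Sigma) d a = 1.

Definition lm_prob (c : seq Sigma -> option Sigma -> R) (y : seq Sigma) : R :=
  c y None * \prod_(i < size y) c (take i y) (Some (tnth (in_tuple y) i)).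

Definition is_LM (c : seq Sigma -> option Sigma -> R) : Prop :=
  (forall h, is_distr (c h)) /\
  (\esum_(y in [set: seq Sigma]) (lm_prob c y)%:E = 1)%E.

Definition pad (n : nat) (h : seq Sigma) : seq (option Sigma) :=
  nseq n.-1 None ++ map Some h.

Definition ngram_history (n : nat) (h : seq Sigma) : seq (option Sigma) :=
  drop (size h) (pad n h).

Definition is_ngram_LM (n : nat) (c : seq Sigma -> option Sigma -> R) : Prop :=
  is_LM c /\
  exists g : seq (option Sigma) -> option Sigma -> R,
    forall h, c h = g (ngram_history n h).

Definition weakly_equivalent (p q : seq Sigma -> R) : Prop :=
  forall y, p y = q y.

Record attn_head (D : nat) := AttnHead {
  hQ : 'rV[R]_D -> 'rV[R]_D;
  hK : 'rV[R]_D -> 'rV[R]_D;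
  hV : 'rV[R]_D -> 'rV[R]_D;
  hO : 'rV[R]_D -> 'rV[R]_D;
  hf : 'rV[R]_D -> 'rV[R]_D -> R;
  hpi : seq R -> seq R
}.

Arguments hQ {D}. Arguments hK {D}. Arguments hV {D}. Arguments hO {D}.
Arguments hf {D}. Arguments hpi {D}.

Definition hardmax (s : seq R) : seq R :=
  let m := \big[Num.max/head 0 s]_(x <- s) x in
  let c := count (pred1 m) s in
  [seq (if x == m then c%:R^-1 else 0) | x <- s].

(* output z_s of a head at (0-based) position s of the input xs *)
Definition head_at {D} (h : attn_head D) (xs : seq 'rV[R]_D) (s : nat) : 'rV[R]_D :=
  let xsP := take s.+1 xs in
  let x_s := nth 0 xs s in
  let q := hQ h x_s in
  let sigma := hpi h [seq hf h q (hK h xj) | xj <- xsP] in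
  let a := \sum_(j < size xsP) (nth 0 sigma j) *: hV h (nth 0 xsP j) + x_s in
  hO h a + a.

Definition apply_head {D} (h : attn_head D) (xs : seq 'rV[R]_D) : seq 'rV[R]_D :=
  [seq head_at h xs s | s <- iota 0 (size xs)].

Record layer (D : nat) := Layer {
  lH : nat;
  lheads : 'I_lH -> attn_head D;
  lcomb : 'rV[R]_(lH * D) -> 'rV[R]_D
}.

Arguments lH {D}. Arguments lheads {D}. Arguments lcomb {D}.

Definition apply_layer {D} (l : layer D) (xs : seq 'rV[R]_D) : seq 'rV[R]_D :=
  [seq lcomb l (mxvec (\matrix_(i < lH l, j < D)
                         (nth 0 (apply_head (lheads l i) xs) s) 0 j))
  | s <- iota 0 (size xs)].

Record transformer := Transformer {
  tD : nat;
  tr : option Sigma -> nat -> 'rV[R]_tD;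
  tlayers : seq (layer tD);
  tF : 'rV[R]_tD -> 'rV[R]_tD;
  tE : option Sigma -> 'I_tD -> \bar R
}.

Arguments tr : clear implicits.
Arguments tF : clear implicits.
Arguments tE : clear implicits.

(* static encoding, positions are 1-based *)
Definition encode (T : transformer) (w : seq (option Sigma)) : seq 'rV[R]_(tD T) :=
  [seq tr T (nth None w j) j.+1 | j <- iota 0 (size w)].

Definition run (T : transformer) (w : seq (option Sigma)) : seq 'rV[R]_(tD T) :=
  foldl (fun xs l => apply_layer l xs) (encode T w) (tlayers T).

Definition final_rep (T : transformer) (w : seq (option Sigma)) : 'rV[R]_(tD T) :=
  last 0 (run T w).

Definition logit_term (T : transformer) (w : seq (option Sigma)) (a : option Sigma)
  (d : 'I_(tD T)) : \bar R :=
  (tE T a d * (tF T (final_rep T w) 0 d)%:E)%E.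

Definition logit (T : transformer) (w : seq (option Sigma)) (a : option Sigma) : \bar R :=
  (\sum_(d < tD T) logit_term T w a d)%E.

Definition ext_exp (x : \bar R) : R := if x is r%:E then expR r else 0.

(* the softmax is well defined: no +oo entries arise and some logit is finite *)
Definition tlm_valid (n : nat) (T : transformer) : Prop :=
  forall h : seq Sigma,
    (forall a d, logit_term T (pad n h) a d != +oo%E) /\
    exists a, logit T (pad n h) a \is a fin_num.

Definition tlm_cond (n : nat) (T : transformer) (h : seq Sigma) (a : option Sigma) : R :=
  ext_exp (logit T (pad n h) a) / \sum_(b : option Sigma) ext_exp (logit T (pad n h) b).

Definition single_layer_hard (T : transformer) (H : nat) : Prop :=
  exists l : layer (tD T),
    tlayers T = [:: l] /\ lH l = H /\ forall i, hpi (lheads l i) = hardmax.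

End LMDefs.

Arguments lm_prob {R Sigma}.
Arguments is_distr {R Sigma}.
Arguments is_LM {R Sigma}.
Arguments pad {Sigma}.
Arguments ngram_history {Sigma}.
Arguments is_ngram_LM {R Sigma}.
Arguments weakly_equivalent {R Sigma}.
Arguments hardmax {R}.
Arguments tlm_valid {R Sigma}.
Arguments tlm_cond {R Sigma}.
Arguments single_layer_hard {R Sigma}.

(* Head i of the layer, for i = 0, ..., n-2, compares positional encodings so that
   hard attention selects exactly the position i steps back, and copies the code of
   the symbol found there.  After one layer the last position therefore carries the
   whole (n-1)-symbol history.  The final function decodes the history, looks up the
   n-gram distribution q and writes both ln (q a) and the indicator of q a = 0 for
   every a; an output row with entries 1 and -oo turns these into the logit ln (q a),
   or -oo when q a = 0, so the softmax returns q exactly. *)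

From HB Require Import structures.
From mathcomp Require Import all_boot all_order all_algebra.
From mathcomp Require Import all_classical all_reals all_analysis.
From mathcomp Require Import zify.
Import Order.TTheory GRing.Theory Num.Theory.

Local Open Scope ring_scope.

Local Arguments hQ {R D}.
Local Arguments hK {R D}.
Local Arguments hV {R D}.
Local Arguments hO {R D}.
Local Arguments hf {R D}.
Local Arguments hpi {R D}.
Local Arguments head_at {R D}.
Local Arguments lheads {R D}.
Local Arguments lcomb {R D}.
Local Arguments apply_layer {R D}.
Local Arguments tr {R Sigma}.
Local Arguments tF {R Sigma}.
Local Arguments tE {R Sigma}.
Local Arguments final_rep {R Sigma}.
Local Arguments logit {R Sigma}.
Local Arguments logit_term {R Sigma}.
Local Arguments encode {R Sigma}.
Local Arguments ext_exp {R}.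

Section HardAttention.
Variable R : realType.

Lemma bigmax_seq_eq1 (l : seq R) (x0 : R) : x0 <= 1 -> all (fun x => x <= 1) l ->
  1 \in l -> \big[Num.max/x0]_(x <- l) x = 1.
Proof.
move=> x0_le1; elim: l => [|a l IHl] //= /andP[a_le1 l_le1].
rewrite in_cons big_cons => /orP[/eqP<-|l1]; last by rewrite IHl // max_r.
apply: max_l; rewrite big_seq; elim/big_ind: _ => //.
  by move=> x y x_le1 y_le1; rewrite ge_max x_le1 y_le1.
by move=> x /(allP l_le1).
Qed.

Lemma hardmax_one_hot (l : seq R) : all (fun x => (x == 0) || (x == 1)) l ->
  count (pred1 1) l = 1%N -> hardmax l = l.
Proof.
move=> l01 count1; rewrite /hardmax.
have l_le1 : all (fun x => x <= 1) l.
  by apply/allP => x /(allP l01) /orP[] /eqP->; rewrite ?ler01.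
have head_le1 : head 0 l <= 1.
  by case: l l_le1 {l01 count1} => [|x l] /=; rewrite ?ler01 // => /andP[].
have l1 : 1 \in l by rewrite -has_pred1 has_count count1.
rewrite bigmax_seq_eq1 // count1 invr1 -[RHS]map_id.
by apply/eq_in_map => x /(allP l01) /orP[] /eqP->; rewrite ?eqxx // eq_sym oner_eq0.
Qed.

Lemma head_at_one_hot D (h : attn_head R D) (xs : seq 'rV[R]_D) s k :
  hpi h = hardmax -> (k <= s)%N -> (s < size xs)%N ->
  (forall j, (j <= s)%N ->
     hf h (hQ h (nth 0 xs s)) (hK h (nth 0 xs j)) = (j == k)%:R) ->
  let a := hV h (nth 0 xs k) + nth 0 xs s in head_at h xs s = hO h a + a.
Proof.
move=> hpiE le_ks lt_s_xs scoreE /=; rewrite /head_at hpiE.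
have size_prefix : size (take s.+1 xs) = s.+1 by rewrite size_takel.
have -> : [seq hf h (hQ h (nth 0 xs s)) (hK h xj) | xj <- take s.+1 xs]
          = [seq (j == k)%:R | j <- iota 0 s.+1].
  rewrite -(map_nth_iota0 0) // -map_comp.
  by apply/eq_in_map => j; rewrite mem_iota => /= lt_js; exact: scoreE.
rewrite hardmax_one_hot; first last.
- rewrite count_map (@eq_count _ _ (pred1 k)) => [|j /=].
    by rewrite count_uniq_mem ?iota_uniq // mem_iota add0n ltnS le_ks.
  by case: (j == k); rewrite ?eqxx // eq_sym oner_eq0.
- by apply/allP => x /mapP[j _ ->]; case: (j == k); rewrite eqxx ?orbT.
rewrite size_prefix; set S := \sum_(j < _) _; suff -> : S = hV h xs`_k by [].
rewrite {}/S; under eq_bigr => j _.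
  rewrite (nth_map 0%N) ?size_iota // nth_iota // add0n nth_take // scaler_nat mulrb.
  over.
by rewrite -big_mkcond (big_ord1_eq _ (fun j => hV h xs`_j)) ltnS le_ks.
Qed.

End HardAttention.

Section SoftmaxOfLogs.
Variables (R : realType) (Sigma : finType).

Definition extended_ln (x : R) : \bar R := if x == 0 then -oo%E else (ln x)%:E.

Lemma ext_exp_extended_ln (x : R) : 0 <= x -> ext_exp (extended_ln x) = x.
Proof.
rewrite /extended_ln le_eqVlt => /orP[/eqP<-|x_gt0]; first by rewrite eqxx.
by rewrite gt_eqF //= lnK.
Qed.

Lemma is_distr_exists_neq0 {d : option Sigma -> R} : is_distr d -> exists a, d a != 0.
Proof.
move=> [_ sum_d1]; case: (pickP (fun a => d a != 0)) => [a da_neq0|d_eq0].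
  by exists a.
move: sum_d1; rewrite big1 => [/esym/eqP|a _]; first by rewrite oner_eq0.
by move/negbFE/eqP: (d_eq0 a).
Qed.

Lemma tlm_cond_extended_ln n (T : transformer R Sigma) (q : seq Sigma -> option Sigma -> R) :
  (forall h, is_distr (q h)) ->
  (forall h a, logit T (pad n h) a = extended_ln (q h a)) ->
  tlm_cond n T = q.
Proof.
move=> q_distr logitE; apply/funext => h; apply/funext => a.
have [q_ge0 sum_q1] := q_distr h.
rewrite /tlm_cond; under eq_bigr do rewrite logitE ext_exp_extended_ln //.
by rewrite sum_q1 divr1 logitE ext_exp_extended_ln.
Qed.

Lemma tlm_valid_extended_ln n (T : transformer R Sigma) (q : seq Sigma -> option Sigma -> R) :
  (forall h, is_distr (q h)) ->
  (forall h a d, logit_term T (pad n h) a d != +oo%E) ->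
  (forall h a, logit T (pad n h) a = extended_ln (q h a)) ->
  tlm_valid n T.
Proof.
move=> q_distr term_finite logitE h; split; first exact: term_finite.
have [a qa_neq0] := is_distr_exists_neq0 (q_distr h).
by exists a; rewrite logitE /extended_ln (negbTE qa_neq0).
Qed.

End SoftmaxOfLogs.

Arguments extended_ln {R}.
Arguments tlm_cond_extended_ln {R Sigma n T q}.
Arguments tlm_valid_extended_ln {R Sigma n T q}.

Section LookbackHead.
Variables (R : realType) (Sigma : finType) (D : nat).

Definition sym_code (a : option Sigma) : R := (enum_rank a)%:R.

Definition pos_sym_enc (a : option Sigma) (j : nat) : 'rV[R]_D.+3 :=
  \row_(d < D.+3) if (d : nat) == 0%N then j%:R
                  else if (d : nat) == 1%N then sym_code a else 0.

Definition copy_sym (x : 'rV[R]_D.+3) : 'rV[R]_D.+3 :=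
  \row_(d < D.+3) if (d : nat) == 2%N then x 0 (inord 1) else 0.

(* Position j attends to position j' exactly when j' + i = j, i.e. i steps back. *)
Definition lookback_head (i : nat) : attn_head R D.+3 :=
  AttnHead R D.+3 id id copy_sym (fun _ => 0)
    (fun q k => (k 0 ord0 + i%:R == q 0 ord0)%:R) hardmax.

Lemma lookback_head_at (u : nat -> option Sigma) k s i : (s < k)%N -> (i <= s)%N ->
  head_at (lookback_head i) [seq pos_sym_enc (u j) j.+1 | j <- iota 0 k] s 0 (inord 2)
  = sym_code (u (s - i)%N).
Proof.
move=> lt_sk le_is; set xs := map _ _.
have xsE j : (j < k)%N -> xs`_j = pos_sym_enc (u j) j.+1.
  by move=> lt_jk; rewrite (nth_map 0%N) ?size_iota // nth_iota.
rewrite (@head_at_one_hot _ _ _ _ _ (s - i)) //=.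
- by rewrite !xsE; [rewrite add0r !mxE !inordK //= addr0 | lia | lia].
- by rewrite leq_subr.
- by rewrite size_map size_iota.
move=> j le_js; rewrite !xsE; [|lia|lia].
by rewrite !mxE /= -natrD eqr_nat; congr (_%:R); apply/eqP/eqP; lia.
Qed.

End LookbackHead.

Section NgramTransformer.
Variables (R : realType) (Sigma : finType) (m : nat).
Variable g : seq (option Sigma) -> option Sigma -> R.

Let nsym := #|{: option Sigma}|.
(* After the layer, coordinates 0..m hold the window (coordinate d is copied from
   coordinate 2 of head d); F writes into coordinates 3..3+2 nsym. *)
Let D := (m + nsym + nsym)%N.

Definition gather_heads (v : 'rV[R]_(m.+1 * D.+3)) : 'rV[R]_D.+3 :=
  \row_(d < D.+3) v 0 (mxvec_index (inord d : 'I_m.+1) (inord 2)).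

Definition lookback_layer : layer R D.+3 :=
  Layer R D.+3 m.+1 (fun i => lookback_head R D i) gather_heads.

Lemma apply_lookback_layer xs s d : (s < size xs)%N -> (d <= m)%N ->
  (apply_layer lookback_layer xs)`_s 0 (inord d)
  = head_at (lookback_head R D d) xs s 0 (inord 2).
Proof.
move=> lt_s_xs le_dm; rewrite /apply_layer (nth_map 0%N) ?size_iota // nth_iota //.
rewrite /= mxE mxvecE mxE /apply_head (nth_map 0%N) ?size_iota // nth_iota //.
by rewrite (@inordK D.+2 d) ?(@inordK m d) //; lia.
Qed.

Definition sym_decode (r : R) : option Sigma := odflt None [pick a | sym_code R Sigma a == r].

Lemma sym_codeK : cancel (sym_code R Sigma) sym_decode.
Proof.
move=> a; rewrite /sym_decode; case: pickP => [b|]; last by move/(_ a); rewrite eqxx.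
by rewrite /sym_code eqr_nat => /eqP/ord_inj/enum_rank_inj->.
Qed.

(* Coordinate d holds the symbol d steps back, so the window is read backwards. *)
Definition read_window (x : 'rV[R]_D.+3) : seq (option Sigma) :=
  [seq sym_decode (x 0 (inord (m - k))) | k <- iota 0 m.+1].

Lemma enum_rank_lt_nsym (a : option Sigma) : (enum_rank a < nsym)%N.
Proof. exact: ltn_ord. Qed.

Definition ln_coord (a : option Sigma) : nat := (3 + enum_rank a)%N.
Definition zero_coord (a : option Sigma) : nat := (3 + nsym + enum_rank a)%N.

(* ln 0 is a junk value; it is absorbed by -oo * 1 from the zero coordinate. *)
Definition out_val (q : option Sigma -> R) (d : nat) : R :=
  if [pick a | d == ln_coord a] is Some a then ln (q a)
  else if [pick a | d == zero_coord a] is Some a then (q a == 0)%:R else 0.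

Definition ngram_out (x : 'rV[R]_D.+3) : 'rV[R]_D.+3 :=
  \row_(d < D.+3) out_val (g (read_window x)) d.

Definition ngram_emb (a : option Sigma) (d : 'I_D.+3) : \bar R :=
  if (d : nat) == ln_coord a then 1%E
  else if (d : nat) == zero_coord a then -oo%E else 0%E.

Definition ngram_transformer : transformer R Sigma :=
  Transformer R Sigma D.+3 (pos_sym_enc R Sigma D) [:: lookback_layer] ngram_out ngram_emb.

Lemma final_rep_ngram w d : (d <= m)%N -> (d < size w)%N ->
  final_rep ngram_transformer w 0 (inord d) = sym_code R Sigma (nth None w ((size w).-1 - d)).
Proof.
move=> le_dm lt_dw; rewrite /final_rep /run /=.
have size_encode : size (encode ngram_transformer w) = size w.
  by rewrite size_map size_iota.
have size_layer : size (apply_layer lookback_layer (encode ngram_transformer w)) = size w.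
  by rewrite size_map size_iota size_encode.
rewrite -nth_last size_layer apply_lookback_layer ?size_encode; [|lia|lia].
by rewrite lookback_head_at //; lia.
Qed.

Lemma read_window_final_rep w : (m < size w)%N ->
  read_window (final_rep ngram_transformer w) = drop (size w - m.+1) w.
Proof.
move=> lt_mw; apply: (@eq_from_nth _ None); first by rewrite size_map size_iota size_drop; lia.
move=> k; rewrite size_map size_iota => lt_km.
rewrite (nth_map 0%N) ?size_iota // nth_iota // add0n final_rep_ngram; [|lia|lia].
by rewrite sym_codeK nth_drop; congr nth; lia.
Qed.

Lemma read_window_pad h :
  read_window (final_rep ngram_transformer (pad m.+2 h)) = ngram_history m.+2 h.
Proof.
have size_pad : size (pad m.+2 h) = (m.+1 + size h)%N.
  by rewrite size_cat size_nseq size_map.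
rewrite read_window_final_rep size_pad; last lia.
by rewrite /ngram_history; congr (drop _ _); lia.
Qed.

Lemma ln_coord_neq_zero_coord a b : ln_coord a != zero_coord b.
Proof.
by rewrite /ln_coord /zero_coord -addnA eqn_add2l neq_ltn (leq_trans (ltn_ord _)) ?leq_addr.
Qed.

Lemma out_val_ln q a : out_val q (ln_coord a) = ln (q a).
Proof.
rewrite /out_val; case: pickP => [b|]; last by move/(_ a); rewrite eqxx.
by move=> /eqP/addnI/ord_inj/enum_rank_inj->.
Qed.

Lemma out_val_zero q a : out_val q (zero_coord a) = (q a == 0)%:R.
Proof.
rewrite /out_val; case: pickP => [b /eqP ab|_].
  by move: (ln_coord_neq_zero_coord b a); rewrite ab eqxx.
case: pickP => [b|]; last by move/(_ a); rewrite eqxx.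
by move=> /eqP/addnI/ord_inj/enum_rank_inj->.
Qed.

Lemma logit_term_ngram_neq_pinfty w a d : logit_term ngram_transformer w a d != +oo%E.
Proof.
rewrite /logit_term /= /ngram_emb; case: ifP => _; first by rewrite mul1e.
case: ifP => [/eqP d_zero|_]; last by rewrite mul0e.
by rewrite mxE d_zero out_val_zero; case: (_ == 0); rewrite ?mule1 ?mule0.
Qed.

Lemma logit_ngram w a :
  logit ngram_transformer w a = extended_ln (g (read_window (final_rep ngram_transformer w)) a).
Proof.
set q := g _; rewrite /logit /logit_term /=.
have lt_ln : (ln_coord a < D.+3)%N.
  by have := enum_rank_lt_nsym a; rewrite /ln_coord /D; lia.
have lt_zero : (zero_coord a < D.+3)%N.
  by have := enum_rank_lt_nsym a; rewrite /zero_coord /D; lia.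
have neq_coords : Ordinal lt_zero != Ordinal lt_ln.
  by rewrite -val_eqE eq_sym ln_coord_neq_zero_coord.
rewrite (bigD1 (Ordinal lt_ln)) // (bigD1 (Ordinal lt_zero)) /=; last by rewrite neq_coords.
rewrite big1 => [|d /andP[d_ln d_zero]]; last first.
  rewrite /ngram_emb -!val_eqE /= in d_ln d_zero *.
  by rewrite (negbTE d_ln) (negbTE d_zero) mul0e.
rewrite /ngram_emb eqxx eq_sym (negbTE (ln_coord_neq_zero_coord a a)) eqxx.
rewrite !mxE out_val_ln out_val_zero mul1e adde0 -/q /extended_ln.
by case: (q a == 0); rewrite ?mule1 ?addeNy ?mule0 ?adde0.
Qed.

End NgramTransformer.

Theorem theorem3p1 (R : realType) (Sigma : finType) (n : nat)
  (p : seq Sigma -> option Sigma -> R) :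
  (0 < #|Sigma|)%N -> (2 <= n)%N -> is_ngram_LM n p ->
  exists T : transformer R Sigma,
    single_layer_hard T (n - 1) /\ tlm_valid n T /\
    weakly_equivalent (lm_prob p) (lm_prob (tlm_cond n T)).
Proof.
move=> _; case: n => [|[|m]] // _ [[p_distr _] [g pE]].
set T := ngram_transformer R Sigma m g.
have logitE h a : logit T (pad m.+2 h) a = extended_ln (p h a).
  by rewrite logit_ngram read_window_pad pE.
exists T; split; [|split].
- by exists (lookback_layer R Sigma m).
- exact: tlm_valid_extended_ln p_distr (fun h => logit_term_ngram_neq_pinfty _ _ _ _ _) logitE.
- by rewrite (tlm_cond_extended_ln p_distr logitE).
Qed.
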